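(* Let $X$ be a random variable taking values in a finite set $\mathcal{X}$ according to a PMF $P$, and let $f\colon\mathcal{X}\to\{1,\dots,|\mathcal{X}|\}$ be a bijection. Then $$\mathbb{E}[\log f(X)]\ \ge\ H(X)-\log\big(\ln|\mathcal{X}|+3/2\big).$$
   Context: $\log$ is base 2, $\ln$ is the natural logarithm, and $H(X)$ is the Shannon entropy (base 2) of $X$. *)

From mathcomp Require Import all_boot all_order all_algebra.
From mathcomp Require Import all_classical all_reals all_analysis.
Set Implicit Arguments. Unset Strict Implicit. Unset Printing Implicit Defensive.
Import Order.TTheory GRing.Theory Num.Theory.
Local Open Scope ring_scope.

Definition log2 {R : realType} (x : R) : R := ln x / ln 2.

Definition is_pmf {R : realType} {T : finType} (P : T -> R) : Prop :=
  (forall x, 0 <= P x) /\ \sum_(x : T) P x = 1.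

(* Shannon entropy (base 2), with the convention 0 log 0 = 0 *)
Definition entropy {R : realType} {T : finType} (P : T -> R) : R :=
  - \sum_(x : T | P x != 0) P x * log2 (P x).

Definition expect {R : realType} {T : finType} (P : T -> R) (g : T -> R) : R :=
  \sum_(x : T) P x * g x.

From mathcomp Require Import all_boot all_order all_algebra.
From mathcomp Require Import all_classical all_reals all_analysis.
From mathcomp Require Import ring lra.
Import Order.TTheory GRing.Theory Num.Theory.
Local Open Scope ring_scope.

(* Write k x = f x + 1 for the codeword "length" assigned to x
   and L = ln |X| + 3/2.  The weights 1 / k x are a permutation of the
   harmonic numbers 1, 1/2, ..., 1/|X|, whose sum is at most 1 + ln |X| <= L.
   A Gibbs-type inequality then says that for any positive k with
   sum_x 1 / k x <= c, the entropy is at most E[log k(X)] + log c: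
   pointwise, ln y <= y - 1 applied to y = 1 / (P x k x c) bounds
   -P x ln P x by P x (ln k x + ln c) + 1/(k x c) - P x, and summing over
   the support of P gives the claim. *)

Lemma ln_le_subr1 {R : realType} {y : R} : 0 < y -> ln y <= y - 1.
Proof.
move=> y_gt0; have := @le_ln1Dx R (y - 1); rewrite addrCA subrr addr0; apply; lra.
Qed.

Lemma harmonic_term_le_ln (R : realType) (n : nat) :
  (n.+2%:R : R)^-1 <= ln n.+2%:R - ln n.+1%:R.
Proof.
have n1_gt0 : (0 : R) < n.+1%:R by rewrite ltr0n.
have n2_gt0 : (0 : R) < n.+2%:R by rewrite ltr0n.
have := ln_le_subr1 (divr_gt0 n1_gt0 n2_gt0).
rewrite ln_div ?posrE // => ln_ratio.
have ratio_sub1 : (n.+1%:R / n.+2%:R : R) - 1 = - (n.+2%:R)^-1.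
  by field; rewrite lt0r_neq0.
by rewrite -lerN2 opprB -ratio_sub1.
Qed.

Lemma harmonic_le_ln (R : realType) (n : nat) : (0 < n)%N ->
  \sum_(i < n) (i.+1%:R : R)^-1 <= 1 + ln n%:R.
Proof.
case: n => // n _; elim: n => [|n IH]; first by rewrite big_ord1 ln1 invr1 addr0.
rewrite big_ord_recr /=.
have := harmonic_term_le_ln R n => step.
apply: le_trans (lerD IH step) _; lra.
Qed.

Lemma gibbs_term {R : realType} {p k c : R} : 0 < p -> 0 < k -> 0 < c ->
  - (p * ln p) <= p * (ln k + ln c) + (k * c)^-1 - p.
Proof.
move=> p_gt0 k_gt0 c_gt0.
have inv_pkc_gt0 : 0 < (p * k * c)^-1 by rewrite invr_gt0 !mulr_gt0.
have := ln_le_subr1 inv_pkc_gt0.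
rewrite lnV ?posrE ?mulr_gt0 // !lnM ?posrE ?mulr_gt0 // => ln_bound.
have := ler_wpM2l (ltW p_gt0) ln_bound.
have -> : p * ((p * k * c)^-1 - 1) = (k * c)^-1 - p.
  by field; rewrite !lt0r_neq0.
lra.
Qed.

Section EntropyBound.
Context {R : realType} {T : finType} {P : T -> R}.
Hypothesis P_pmf : is_pmf P.

Lemma sum_over_support (F : T -> R) : (forall x, P x = 0 -> F x = 0) ->
  \sum_x F x = \sum_(x | P x != 0) F x.
Proof.
move=> F0; rewrite (bigID (fun x => P x != 0)) /= [X in _ + X]big1 ?addr0 //.
by move=> x /negPn/eqP/F0.
Qed.

Lemma support_mass : \sum_(x | P x != 0) P x = 1.
Proof. by case: P_pmf => _ <-; rewrite (@sum_over_support P). Qed.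

Lemma pmf_card_gt0 : (0 < #|T|)%N.
Proof.
case: (pickP T) => [x _|T_empty]; first by apply/card_gt0P; exists x.
by case: P_pmf => _; rewrite big_pred0 // => /esym/eqP; rewrite oner_eq0.
Qed.

Lemma entropy_ln_le {k : T -> R} {c : R} :
  (forall x, 0 < k x) -> 0 < c -> \sum_x (k x)^-1 <= c ->
  - \sum_(x | P x != 0) P x * ln (P x) <= \sum_x P x * ln (k x) + ln c.
Proof.
move=> k_gt0 c_gt0 kraft; case: P_pmf => P_ge0 _.
have terms : \sum_(x | P x != 0) - (P x * ln (P x)) <=
    \sum_(x | P x != 0) (P x * (ln (k x) + ln c) + (k x * c)^-1 - P x).
  apply: ler_sum => x Px0; apply: gibbs_term => //.
  by rewrite lt0r Px0 P_ge0.
have weights : \sum_(x | P x != 0) (k x * c)^-1 <= 1.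
  apply: le_trans (_ : \sum_x (k x * c)^-1 <= 1).
    rewrite [X in _ <= X](bigID (fun x => P x != 0)) /= lerDl.
    by apply: sumr_ge0 => x _; rewrite invr_ge0 ltW ?mulr_gt0.
  under eq_bigr do rewrite invfM.
  by rewrite -mulr_suml ler_pdivrMr // mul1r.
have expect_support : \sum_x P x * ln (k x) = \sum_(x | P x != 0) P x * ln (k x).
  by apply: sum_over_support => x ->; rewrite mul0r.
have split_terms : \sum_(x | P x != 0) (P x * (ln (k x) + ln c) + (k x * c)^-1 - P x)
    = \sum_x P x * ln (k x) + ln c + \sum_(x | P x != 0) (k x * c)^-1 - 1.
  under eq_bigr do rewrite mulrDr.
  by rewrite sumrB !big_split /= -mulr_suml support_mass mul1r expect_support.
move: terms; rewrite sumrN split_terms; lra.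
Qed.

Lemma entropy_le_expect_log2 {k : T -> R} {c : R} :
  (forall x, 0 < k x) -> 0 < c -> \sum_x (k x)^-1 <= c ->
  entropy P <= expect P (fun x => log2 (k x)) + log2 c.
Proof.
move=> k_gt0 c_gt0 kraft.
have inv_ln2_gt0 : (0 : R) < (ln 2)^-1 by rewrite invr_gt0 ln_gt0 // ltr1n.
rewrite /entropy /expect /log2.
under eq_bigr do rewrite mulrA.
under [X in _ <= X + _]eq_bigr do rewrite mulrA.
rewrite -!mulr_suml -mulNr -mulrDl ler_pM2r //.
exact: entropy_ln_le.
Qed.

End EntropyBound.

Lemma sum_inv_bijection (R : realType) (T : finType) (f : T -> 'I_#|T|) :
  bijective f ->
  \sum_x ((f x).+1%:R : R)^-1 = \sum_(i < #|T|) (i.+1%:R : R)^-1.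
Proof. by move=> f_bij; rewrite (reindex f (onW_bij _ f_bij)). Qed.

Theorem lemma4 (R : realType) (T : finType) (P : T -> R)
  (f : T -> 'I_#|T|) :
  is_pmf P -> bijective f ->
  expect P (fun x => log2 ((nat_of_ord (f x)).+1%:R)) >=
  entropy P - log2 (ln (#|T|%:R) + 3 / 2).
Proof.
move=> P_pmf f_bij.
have card_gt0 := pmf_card_gt0 P_pmf.
have ln_card_ge0 : (0 : R) <= ln #|T|%:R by rewrite ln_ge0 // ler1n.
have L_gt0 : (0 : R) < ln #|T|%:R + 3 / 2 by lra.
have kraft : \sum_x ((f x).+1%:R : R)^-1 <= ln #|T|%:R + 3 / 2.
  rewrite sum_inv_bijection //.
  have := harmonic_le_ln R _ card_gt0; lra.
have k_gt0 : forall x, (0 : R) < (f x).+1%:R by move=> x; rewrite ltr0n.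
by rewrite lerBlDr; apply: entropy_le_expect_log2.
Qed.
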